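(* In the pure Call-by-Name $\lambda$-calculus, let $\rightsquigarrow_U$ be the unbiased iteration of head reduction (as in the context). If $M\to_\beta M'$ and not $M\rightsquigarrow_UM'$, then $\omega(M)=\omega(M')$.
   Context: Pure $\lambda$-terms $M::=x\mid\lambda x.M\mid MM$; $\to_\beta$ is the closure of $(\lambda x.M)N\mapsto M\{N/x\}$ under all contexts. Head reduction $\to_h$ is the closure of $\beta$ under head contexts $H::=[\,]\mid\lambda x.H\mid HM$. $\rightsquigarrow_U$: if $M\to_hM'$ then $M\rightsquigarrow_UM'$; if $M$ is $\to_h$-normal: $\lambda x.P\rightsquigarrow_U\lambda x.P'$ if $P\rightsquigarrow_UP'$; $PQ\rightsquigarrow_UP'Q$ if $P\rightsquigarrow_UP'$; $PQ\rightsquigarrow_UPQ'$ if $Q\rightsquigarrow_UQ'$. A head normal form is a term $\lambda x_1\dots x_n.xM_1\dots M_p$ ($n,p\ge0$). Partial $\lambda$-terms: $P::=\Omega\mid x\mid PP\mid\lambda x.P$. The partial normal form $\omega(M)$ is $\Omega$ if $M$ is not a head normal form, and $\lambda\vec x.x\,\omega(M_1)\dots\omega(M_p)$ if $M=\lambda\vec x.xM_1\dots M_p$. *)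

(* Pure lambda-terms in de Bruijn notation (terms up to alpha). *)
From Stdlib Require Import Arith.

Inductive term : Type :=
| Var : nat -> term
| Lam : term -> term
| App : term -> term -> term.

Fixpoint lift (c : nat) (t : term) : term :=
  match t with
  | Var n => if n <? c then Var n else Var (S n)
  | Lam t' => Lam (lift (S c) t')
  | App a b => App (lift c a) (lift c b)
  end.

Fixpoint subst (k : nat) (u : term) (t : term) : term :=
  match t with
  | Var n => if n =? k then u else if k <? n then Var (pred n) else Var n
  | Lam t' => Lam (subst (S k) (lift 0 u) t')
  | App a b => App (subst k u a) (subst k u b)
  end.

Inductive beta : term -> term -> Prop :=
| beta_root : forall M N, beta (App (Lam M) N) (subst 0 N M)
| beta_lam : forall M M', beta M M' -> beta (Lam M) (Lam M')
| beta_appl : forall M M' N, beta M M' -> beta (App M N) (App M' N)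
| beta_appr : forall M N N', beta N N' -> beta (App M N) (App M N').

Inductive hred : term -> term -> Prop :=
| hred_root : forall M N, hred (App (Lam M) N) (subst 0 N M)
| hred_lam : forall M M', hred M M' -> hred (Lam M) (Lam M')
| hred_app : forall M M' N, hred M M' -> hred (App M N) (App M' N).

Definition hnormal (M : term) : Prop := forall M', ~ hred M M'.

Inductive ured : term -> term -> Prop :=
| ured_head : forall M M', hred M M' -> ured M M'
| ured_lam : forall P P', hnormal (Lam P) -> ured P P' -> ured (Lam P) (Lam P')
| ured_appl : forall P P' Q, hnormal (App P Q) -> ured P P' -> ured (App P Q) (App P' Q)
| ured_appr : forall P Q Q', hnormal (App P Q) -> ured Q Q' -> ured (App P Q) (App P Q').

Inductive pterm : Type :=
| POmega : pterm
| PVar : nat -> pterm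
| PApp : pterm -> pterm -> pterm
| PLam : pterm -> pterm.

Fixpoint is_neutral (t : term) : bool :=
  match t with
  | Var _ => true
  | App a _ => is_neutral a
  | Lam _ => false
  end.

Fixpoint is_hnf (t : term) : bool :=
  match t with
  | Lam t' => is_hnf t'
  | _ => is_neutral t
  end.

Fixpoint omega (t : term) : pterm :=
  match t with
  | Var n => PVar n
  | Lam t' => if is_hnf t' then PLam (omega t') else POmega
  | App a b => if is_neutral a then PApp (omega a) (omega b) else POmega
  end.


(* A beta-step that is not a head step changes neither whether a term is
   neutral nor whether it is a head normal form, so [omega] can only see it if
   it happens under the lambdas of a head normal form or inside the spine of a
   neutral term.  Those terms are head normal, which is exactly where the
   unbiased strategy descends, so by induction on the step it would be a
   [ured] step. *)

Lemma neutral_hnormal (t : term) : is_neutral t = true -> hnormal t.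
Proof.
  induction t as [n | t _ | t1 IH1 t2 _]; simpl; intros Hneu t' Hred.
  - inversion Hred.
  - discriminate.
  - inversion Hred; subst.
    + discriminate.
    + eapply IH1; eauto.
Qed.

Lemma hnf_hnormal (t : term) : is_hnf t = true -> hnormal t.
Proof.
  induction t as [n | t IH | t1 _ t2 _]; simpl; intros Hhnf t' Hred.
  - inversion Hred.
  - inversion Hred; subst. eapply IH; eauto.
  - exact (neutral_hnormal (App t1 t2) Hhnf t' Hred).
Qed.

Lemma beta_nonhead_is_neutral (M M' : term) :
  beta M M' -> ~ hred M M' -> is_neutral M' = is_neutral M.
Proof.
  induction 1 as [M N | M M' _ _ | M M' N _ IH | M N N' _ _]; intros Hnh; simpl.
  - exfalso. apply Hnh. constructor.
  - reflexivity.
  - apply IH. intro Hred. apply Hnh. now constructor.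
  - reflexivity.
Qed.

Lemma beta_nonhead_is_hnf (M M' : term) :
  beta M M' -> ~ hred M M' -> is_hnf M' = is_hnf M.
Proof.
  induction 1 as [M N | M M' _ IH | M M' N Hb _ | M N N' _ _]; intros Hnh.
  - exfalso. apply Hnh. constructor.
  - apply IH. intro Hred. apply Hnh. now constructor.
  - apply (beta_nonhead_is_neutral (App M N)); [now constructor | exact Hnh].
  - reflexivity.
Qed.

Theorem mainTheorem16 : forall M M' : term,
  beta M M' -> ~ ured M M' -> omega M = omega M'.
Proof.
  induction 1 as [M N | M M' Hb IH | M M' N Hb IH | M N N' _ IH]; intros Hnu.
  - exfalso. apply Hnu, ured_head. constructor.
  - simpl. rewrite (beta_nonhead_is_hnf M M' Hb).
    + destruct (is_hnf M) eqn:Hhnf; [|reflexivity].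
      f_equal. apply IH. intro Hu. apply Hnu, ured_lam; [now apply hnf_hnormal | exact Hu].
    + intro Hh. apply Hnu, ured_head. now constructor.
  - simpl. rewrite (beta_nonhead_is_neutral M M' Hb).
    + destruct (is_neutral M) eqn:Hneu; [|reflexivity].
      f_equal. apply IH. intro Hu.
      apply Hnu, ured_appl; [now apply neutral_hnormal | exact Hu].
    + intro Hh. apply Hnu, ured_head. now constructor.
  - simpl. destruct (is_neutral M) eqn:Hneu; [|reflexivity].
    f_equal. apply IH. intro Hu.
    apply Hnu, ured_appr; [now apply neutral_hnormal | exact Hu].
Qed.
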